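(* Let $b,c,t$ be positive integers, $n=tb$, and let $\mathbf{H}^{*}_{qc}$ be a $cb\times tb$ binary matrix which is a $c\times t$ array of $b\times b$ circulant matrices over $\mathbb{F}_2$, of rank $r$ over $\mathbb{F}_2$. Let $\mathcal{C}\subseteq\mathbb{F}_2^n$ be the code with parity-check matrix $\mathbf{H}^{*}_{qc}$ and $\Lambda=\mathcal{C}+2\mathbb{Z}^n=\{\mathbf{x}\in\mathbb{Z}^n:\mathbf{x}\bmod 2\in\mathcal{C}\}$. Suppose $l$ with $c\le l\le t$ is the least number of columns of circulants of $\mathbf{H}^{*}_{qc}$ forming a submatrix of rank $r$, and that the last $l$ columns of circulants form such a $cb\times lb$ submatrix $\mathbf{D}^{*}$. Suppose $d_1,\dots,d_l\in\{0,\dots,b\}$, $\bar d_j=b-d_j$, are such that the columns of $\mathbf{D}^{*}$ consisting, for each $j$, of the last $\bar d_j$ columns of its $j$-th column block (width $b$) are linearly independent over $\mathbb{F}_2$ and number exactly $r$. For each $i$ with $d_i\ge1$, let $\mathbf{w}_i=(\mathbf{w}_i^{(1)},\dots,\mathbf{w}_i^{(l)})\in\mathbb{F}_2^{lb}$, $\mathbf{w}_i^{(j)}\in\mathbb{F}_2^b$, be the vector with $\mathbf{D}^{*}\mathbf{w}_i^t=\mathbf{0}$ whose first $d_j$ entries of $\mathbf{w}_i^{(j)}$ are $(1,0,\dots,0)$ if $j=i$ and all $0$ otherwise; with $\sigma$ the cyclic right shift on $\mathbb{F}_2^b$, let $\mathbf{Q}$ be the $(lb-r)\times tb$ matrix with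 rows $(\mathbf{0}_{(t-l)b},\sigma^s(\mathbf{w}_i^{(1)}),\dots,\sigma^s(\mathbf{w}_i^{(l)}))$ for $i=1,\dots,l$, $s=0,\dots,d_i-1$. Let $\mathbf{G}=[\mathbf{I}_{(t-l)b}\,|\,\mathbf{G}']$ with $\mathbf{G}'$ a $(t-l)\times l$ array of $b\times b$ circulants, and assume $\mathbf{G}^{*}_{qc}=\begin{bmatrix}\mathbf{G}\\ \mathbf{Q}\end{bmatrix}$ is a generator matrix of $\mathcal{C}$. Let $\mathbf{R}=[\mathbf{0}_{r\times(t-l)b}\,|\,\mathbf{B}]$, where $\mathbf{B}$ is block diagonal with $j$-th block $[\mathbf{0}_{\bar d_j\times d_j}\ \ 2\mathbf{I}_{\bar d_j}]$, and let $\mathbf{G}_\Lambda=\begin{bmatrix}\mathbf{G}^{*}_{qc}\\ \mathbf{R}\end{bmatrix}$ (entries as integers). Then $|\det(\mathbf{G}_\Lambda)|=2^r$; that is, the volume of $\Lambda$ (the volume of a fundamental region, $\sqrt{\det(\mathbf{G}_\Lambda\mathbf{G}_\Lambda^t)}$) equals $2^r$, where $r=\mathrm{rank}_{\mathbb{F}_2}(\mathbf{H}^{*}_{qc})$.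
   Context: Codewords of a binary code are embedded in $\mathbb{Z}^n$ with entries $0,1$; $\Lambda=\mathcal{C}+2\mathbb{Z}^n$ is the Construction A (QC-LDPC) lattice of $\mathcal{C}$. *)

From HB Require Import structures.
From mathcomp Require Import all_boot all_order all_algebra.
Unset Printing Implicit Defensive.
Import Order.TTheory GRing.Theory Num.Theory.
Local Open Scope ring_scope.

(* Indices k : 'I_n of F^n (n = m*b) are grouped into consecutive blocks of
   width b: block k %/ b, offset k %% b inside the block. *)

Definition bnext (b : nat) {n : nat} (k : 'I_n) : 'I_n :=
  insubd k ((k %/ b) * b + (k %% b).+1 %% b)%N.

Definition bprev (b : nat) {n : nat} (k : 'I_n) : 'I_n :=
  insubd k ((k %/ b) * b + (k %% b + b.-1) %% b)%N.

(* blockwise cyclic right shift sigma applied to every b-block of x *)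
Definition bshift {R : Type} (b : nat) {n : nat} (x : 'rV[R]_n) : 'rV[R]_n :=
  \row_(k < n) x 0 (bprev b k).

Definition subcols {R : Type} {m n : nat} (A : 'M[R]_(m, n)) (P : {pred 'I_n})
  : 'M[R]_(m, #|P|) := colsub (@enum_val _ P) A.

Definition blkcols (t b : nat) (S : {set 'I_t}) : {pred 'I_(t * b)} :=
  [pred k : 'I_(t * b) | [exists j in S, (j : nat) == (k %/ b)%N]].

Definition lastcols (t l b : nat) : {pred 'I_(t * b)} :=
  [pred k : 'I_(t * b) | (t - l <= k %/ b)%N].

Definition selcols (t l b : nat) (d : nat -> nat) : {pred 'I_(t * b)} :=
  [pred k : 'I_(t * b) | (t - l <= k %/ b)%N && (d (k %/ b - (t - l)) <= k %% b)%N].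

Definition mx_of_rows {R : Type} {n : nat} (x0 : 'rV[R]_n) (s : seq 'rV[R]_n)
  : 'M[R]_(size s, n) := \matrix_(i < size s) nth x0 s i.

Definition F2toZ (x : 'F_2) : int := (nat_of_ord x)%:Z.
Definition rowZ {n : nat} (x : 'rV['F_2]_n) : 'rV[int]_n := map_mx F2toZ x.

Definition two_e (n p : nat) : 'rV[int]_n :=
  \row_(k < n) (if (k : nat) == p then 2 else 0).

(* rows of Q: for i = 0..l-1, s = 0..d i - 1, sigma^s applied blockwise to
   the zero-padded vector w i *)
Definition Q_rows (n l : nat) (b : nat) (d : nat -> nat) (w : nat -> 'rV['F_2]_n)
  : seq 'rV['F_2]_n :=
  flatten [seq [seq iter s (@bshift _ b n) (w i) | s <- iota 0 (d i)] | i <- iota 0 l].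

Definition G_rows {m n : nat} (G : 'M['F_2]_(m, n)) : seq 'rV['F_2]_n :=
  [seq row i G | i <- enum 'I_m].

(* rows of R = [0 | B], B block diagonal with blocks [0_{dbar x d} 2 I_dbar] *)
Definition R_rows (t l b : nat) (d : nat -> nat) : seq 'rV[int]_(t * b) :=
  flatten [seq [seq two_e (t * b) ((t - l + j) * b + d j + s)
               | s <- iota 0 (b - d j)] | j <- iota 0 l].

Definition Gqc (t l b : nat) (d : nat -> nat) (w : nat -> 'rV['F_2]_(t * b))
  (G : 'M['F_2]_((t - l) * b, t * b)) :=
  mx_of_rows 0 (G_rows G ++ Q_rows (t * b) l b d w).

Definition GLambda (t l b : nat) (d : nat -> nat) (w : nat -> 'rV['F_2]_(t * b))
  (G : 'M['F_2]_((t - l) * b, t * b)) : 'M[int]_(t * b) :=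
  \matrix_(i < t * b)
    nth 0 ([seq rowZ x | x <- G_rows G ++ Q_rows (t * b) l b d w] ++ R_rows t l b d) i.

From HB Require Import structures.
From mathcomp Require Import all_boot all_order all_algebra all_fingroup zify.
Import Order.TTheory GRing.Theory Num.Theory.
Local Open Scope ring_scope.

(* Every row of G_Lambda has a pivot column, and the pivots run through all
   columns exactly once: row k of G = [I | G'] pivots on column k, the row
   sigma^s(w_i) on offset s of block i of D*, and a row 2e_p of R on p.
   Order the columns as: the first (t - l) b, then the Q-pivots by decreasing
   offset, then the R-pivots. Each row vanishes on the columns preceding its
   pivot, so up to a row permutation G_Lambda is triangular, and |det| is the
   product of the pivot entries: 1 for the rows of G and Q, 2 for the r rows
   of R. *)

Lemma perm_rank_increasing_eq1 (T : finType) (q : {perm T}) (rk : T -> nat) :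
  (forall i, q i != i -> (rk i < rk (q i))%N) -> q = 1%g.
Proof.
move=> rk_lt; apply/permP => i0; rewrite perm1; apply/eqP/negPn/negP => qi0.
have rk_le i : (rk i <= rk (q i))%N by have [->|/rk_lt/ltnW] := eqVneq (q i) i.
have : (\sum_i rk (q i) = \sum_i rk i)%N by rewrite [RHS](reindex_inj (@perm_inj _ q)).
rewrite (bigD1 i0) //= [in RHS](bigD1 i0) //=.
have := @leq_sum _ (index_enum T) (fun i => i != i0) rk (fun i => rk (q i)) (fun i _ => rk_le i).
have := rk_lt _ qi0; lia.
Qed.

Lemma normr_det_triangular_perm (R : numDomainType) n (A : 'M[R]_n)
    (f : 'I_n -> 'I_n) (rk : 'I_n -> nat) :
  injective f ->
  (forall i i', i' != i -> A i (f i') != 0 -> (rk i < rk i')%N) ->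
  `|\det A| = \prod_i `|A i (f i)|.
Proof.
move=> f_inj rk_lt; pose p := perm f_inj.
rewrite /determinant (bigD1 p) //= [X in _ + X]big1 ?addr0.
  by rewrite normrM normr_sign mul1r normr_prod; apply: eq_bigr => i _; rewrite permE.
move=> s s_neq_p; apply/eqP; rewrite mulf_eq0 orbC; apply/norP=> -[/prodf_neq0 s_nz _].
pose q := (s * p^-1)%g.
have sE i : s i = f (q i) by rewrite permM -[in LHS](permKV p (s i)) permE.
have q1 : q = 1%g.
  by apply: perm_rank_increasing_eq1 => i qi; apply: (rk_lt i (q i)); rewrite -?sE ?s_nz.
by move/eqP: s_neq_p; apply; apply/permP => i; rewrite sE q1 perm1 permE.
Qed.

Lemma perm_flatten_cat (T : eqType) (I : Type) (A B : I -> seq T) (s : seq I) :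
  perm_eq (flatten [seq A j ++ B j | j <- s])
          (flatten (map A s) ++ flatten (map B s)).
Proof.
elim: s => [|j s IH] //=.
by rewrite (perm_catl _ IH) perm_catACA.
Qed.

Lemma iota_mul_blocks b L k :
  iota (k * b) (L * b) = flatten [seq iota ((k + j) * b) b | j <- iota 0 L].
Proof.
elim: L k => [|L IH] k //=.
rewrite mulSn iotaD addn0 -mulSnr IH -(addn0 1%N) iotaDl -map_comp.
by congr (_ ++ flatten _); apply: eq_map => j /=; rewrite add1n addSnnS.
Qed.

Lemma block_divmod (a b s : nat) : (s < b)%N ->
  ((a * b + s) %/ b = a)%N /\ ((a * b + s) %% b = s)%N.
Proof.
move=> s_lt_b; have b_gt0 : (0 < b)%N by apply: leq_ltn_trans s_lt_b.
by rewrite divnMDl // divn_small // addn0 modnMDl modn_small.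
Qed.

Lemma bprev_divmod t b (k : 'I_(t * b)) : (0 < b)%N ->
  (bprev b k %/ b = k %/ b)%N /\ (bprev b k %% b = (k %% b + b.-1) %% b)%N.
Proof.
move=> b_gt0; have off_lt : ((k %% b + b.-1) %% b < b)%N by rewrite ltn_pmod.
rewrite /bprev insubdK; first exact: block_divmod.
have k_blk : (k %/ b < t)%N by rewrite ltn_divLR.
apply: (@leq_trans ((k %/ b).+1 * b)); first by rewrite mulSn addnC ltn_add2r.
by rewrite leq_mul2r k_blk orbT.
Qed.

Lemma iter_bprev_div t b s (k : 'I_(t * b)) : (0 < b)%N ->
  (iter s (bprev b) k %/ b = k %/ b)%N.
Proof. by move=> b_gt0; elim: s => //= s IH; rewrite (bprev_divmod _ _ _ b_gt0).1. Qed.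

Lemma iter_bprev_mod t b s (k : 'I_(t * b)) : (0 < b)%N -> (s <= k %% b)%N ->
  (iter s (bprev b) k %% b = k %% b - s)%N.
Proof.
move=> b_gt0; elim: s => [|s IH] s_le; first by rewrite subn0.
rewrite /= (bprev_divmod _ _ _ b_gt0).2 IH ?(ltnW s_le) //.
have k_off : (k %% b < b)%N by rewrite ltn_pmod.
have -> : (k %% b - s + b.-1 = b + (k %% b - s.+1))%N by lia.
by rewrite modnDl modn_small //; lia.
Qed.

Lemma iter_bshiftE (R : Type) b n s (x : 'rV[R]_n) (k : 'I_n) :
  iter s (bshift b) x 0 k = x 0 (iter s (bprev b) k).
Proof. by elim: s k => [|s IH] k //=; rewrite mxE IH -iterSr. Qed.

Lemma nth_G_rows {m n} (G : 'M['F_2]_(m, n)) {c} (c_lt : (c < m)%N) :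
  nth 0 (G_rows G) c = row (Ordinal c_lt) G.
Proof.
rewrite /G_rows (nth_map (Ordinal c_lt)) ?size_enum_ord //.
by congr row; apply/val_inj; rewrite /= nth_enum_ord.
Qed.

Section PivotRows.

Variables (t l b : nat) (d : nat -> nat) (w : nat -> 'rV['F_2]_(t * b))
  (G : 'M['F_2]_((t - l) * b, t * b)).

Hypothesis b_gt0 : (0 < b)%N.
Hypothesis l_le_t : (l <= t)%N.
Hypothesis d_le_b : forall j, (j < l)%N -> (d j <= b)%N.
Hypothesis G_head : forall (i : 'I_((t - l) * b)) (k : 'I_(t * b)),
  (k < (t - l) * b)%N -> G i k = if (i : nat) == (k : nat) then 1 else 0.
Hypothesis w_head : forall i (k : 'I_(t * b)), (i < l)%N -> (1 <= d i)%N ->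
  (k %/ b < t - l)%N -> w i 0 k = 0.
Hypothesis w_tail : forall i (k : 'I_(t * b)), (i < l)%N -> (1 <= d i)%N ->
  (t - l <= k %/ b)%N -> (k %% b < d (k %/ b - (t - l)))%N ->
  w i 0 k = if ((k %/ b - (t - l))%N == i) && ((k %% b)%N == 0%N) then 1 else 0.

(* [pivot_row c] is the row of G_Lambda pivoting on column c; a column c of
   D* lies in its block [c %/ b - (t - l)] at offset [c %% b]. *)
Definition pivot_row (c : nat) : 'rV[int]_(t * b) :=
  if (c < (t - l) * b)%N then rowZ (nth 0 (G_rows G) c)
  else if (c %% b < d (c %/ b - (t - l)))%N
  then rowZ (iter (c %% b) (bshift b) (w (c %/ b - (t - l))))
  else two_e (t * b) c.

Definition pivot_rank (c : nat) : nat :=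
  if (c < (t - l) * b)%N then 0
  else if (c %% b < d (c %/ b - (t - l)))%N then (b - c %% b).+1 else b.+2.

Definition Q_pivots : seq nat :=
  flatten [seq [seq ((t - l + i) * b + s)%N | s <- iota 0 (d i)] | i <- iota 0 l].

Definition R_pivots : seq nat :=
  flatten [seq [seq ((t - l + j) * b + d j + s)%N | s <- iota 0 (b - d j)]
          | j <- iota 0 l].

Definition pivots : seq nat := iota 0 ((t - l) * b) ++ Q_pivots ++ R_pivots.

Lemma perm_eq_pivots : perm_eq pivots (iota 0 (t * b)).
Proof.
have -> : (t * b = (t - l) * b + l * b)%N by rewrite -mulnDl subnK.
rewrite iotaD add0n iota_mul_blocks /pivots perm_cat2l perm_sym.
set Q := fun j => [seq ((t - l + j) * b + s)%N | s <- iota 0 (d j)].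
set R := fun j => [seq ((t - l + j) * b + d j + s)%N | s <- iota 0 (b - d j)].
suff -> : flatten [seq iota ((t - l + j) * b) b | j <- iota 0 l] =
          flatten [seq Q j ++ R j | j <- iota 0 l] by apply: perm_flatten_cat.
congr flatten; apply/eq_in_map => j; rewrite mem_iota add0n => /andP[_ j_lt].
rewrite /Q /R -{2}(subnKC (d_le_b _ j_lt)) iotaD -[in iota _ (d j)](addn0 (_ * b)%N).
by rewrite iotaDl -[in iota (_ + d j) _](addn0 (_ + d j)%N) iotaDl.
Qed.

Lemma GLambda_rowsE :
  [seq rowZ x | x <- G_rows G ++ Q_rows (t * b) l b d w] ++ R_rows t l b d
  = map pivot_row pivots.
Proof.
rewrite /pivots !map_cat -catA; congr (_ ++ _ ++ _).
- have size_G : size (G_rows G) = ((t - l) * b)%N by rewrite size_map size_enum_ord.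
  rewrite -{1}[G_rows G](mkseq_nth 0) /mkseq size_G -map_comp.
  by apply/eq_in_map => c; rewrite mem_iota /= /pivot_row => ->.
- rewrite /Q_rows /Q_pivots !map_flatten -!map_comp; congr flatten.
  apply/eq_in_map => i; rewrite mem_iota add0n => /andP[_ i_lt] /=.
  rewrite -!map_comp; apply/eq_in_map => s; rewrite mem_iota add0n => /andP[_ s_lt] /=.
  rewrite /pivot_row.
  have [-> ->] := @block_divmod (t - l + i) _ _ (leq_trans s_lt (d_le_b _ i_lt)).
  rewrite addKn s_lt ifF //; apply/negbTE; rewrite -leqNgt.
  by apply: leq_trans (leq_addr _ _); rewrite leq_mul2r leq_addr orbT.
- rewrite /R_rows /R_pivots map_flatten -map_comp; congr flatten.
  apply/eq_in_map => j; rewrite mem_iota add0n => /andP[_ j_lt] /=.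
  rewrite -!map_comp; apply/eq_in_map => s; rewrite mem_iota add0n => /andP[_ s_lt] /=.
  have off_lt : (d j + s < b)%N by rewrite -ltn_subRL.
  rewrite /pivot_row -addnA.
  have [-> ->] := @block_divmod (t - l + j) _ _ off_lt.
  rewrite ifF; last first.
    apply/negbTE; rewrite -leqNgt; apply: leq_trans (leq_addr _ _).
    by rewrite leq_mul2r leq_addr orbT.
  by rewrite addKn ifF // ltnNge leq_addr.
Qed.

Lemma pivot_row_diag (k : 'I_(t * b)) :
  pivot_row k 0 k = if k \in selcols t l b d then 2 else 1.
Proof.
rewrite /pivot_row inE.
have [k_head|k_tail] := ltnP k ((t - l) * b).
  rewrite (nth_G_rows G k_head) /rowZ !mxE G_head //= eqxx.
  by rewrite leqNgt ltn_divLR // k_head.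
have k_blk : (t - l <= k %/ b)%N by rewrite leq_divRL.
have k_lt_t : (k %/ b < t)%N by rewrite ltn_divLR.
rewrite k_blk /=; case: ltnP => k_Q /=; last by rewrite mxE eqxx.
have j_lt : (k %/ b - (t - l) < l)%N by lia.
have d_gt0 : (0 < d (k %/ b - (t - l)))%N by apply: leq_ltn_trans k_Q.
rewrite /rowZ mxE iter_bshiftE w_tail ?iter_bprev_div ?iter_bprev_mod //.
  by rewrite subnn !eqxx.
by rewrite subnn.
Qed.

(* On the Q-columns of offset at least s, sigma^s(w_i) shows the prescribed
   entries (1, 0, ..., 0) of w_i shifted by s: 1 at its pivot, 0 elsewhere. *)
Lemma pivot_row_offdiag c (k : 'I_(t * b)) : (c < t * b)%N -> c != k ->
  pivot_row c 0 k != 0 -> (pivot_rank c < pivot_rank k)%N.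
Proof.
move=> c_lt c_neq_k; rewrite /pivot_row /pivot_rank.
have k_off : (k %% b < b)%N by rewrite ltn_pmod.
have [c_head|c_tail] := ltnP c ((t - l) * b).
  rewrite (nth_G_rows G c_head) /rowZ !mxE.
  have [k_head|] := ltnP k ((t - l) * b); last by case: ifP.
  by rewrite G_head //= (negbTE c_neq_k).
have c_blk : (t - l <= c %/ b)%N by rewrite leq_divRL.
have c_lt_t : (c %/ b < t)%N by rewrite ltn_divLR.
case: ifP => c_Q; last first.
  rewrite mxE; have [k_eq|_] := eqVneq (k : nat) c; last by [].
  by rewrite k_eq eqxx in c_neq_k.
have j_lt : (c %/ b - (t - l) < l)%N by lia.
have d_gt0 : (0 < d (c %/ b - (t - l)))%N by apply: leq_ltn_trans c_Q.
rewrite /rowZ mxE iter_bshiftE.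
have [k_head|k_tail] := ltnP k ((t - l) * b).
  by rewrite w_head ?iter_bprev_div // ltn_divLR.
have k_blk : (t - l <= k %/ b)%N by rewrite leq_divRL.
case: ifP => k_Q; last by lia.
have [c_off_le|] := leqP (c %% b) (k %% b); last by lia.
rewrite w_tail ?iter_bprev_div ?iter_bprev_mod //; last first.
  by apply: leq_ltn_trans k_Q; apply: leq_subr.
case: ifP => //= /andP[/eqP same_blk /eqP same_off].
have c_eq_k : c = k by rewrite (divn_eq c b) (divn_eq k b); congr (_ * _ + _)%N; lia.
by rewrite c_eq_k eqxx in c_neq_k.
Qed.

Lemma normr_det_GLambda : `|\det (GLambda t l b d w G)| = 2 ^+ #|selcols t l b d|.
Proof.
have pivots_size : size pivots = (t * b)%N.
  by rewrite (perm_size perm_eq_pivots) size_iota.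
have pivots_uniq : uniq pivots by rewrite (perm_uniq perm_eq_pivots) iota_uniq.
have pivot_lt (m : 'I_(t * b)) : (nth 0%N pivots m < t * b)%N.
  have : nth 0%N pivots m \in iota 0 (t * b).
    by rewrite -(perm_mem perm_eq_pivots) mem_nth // pivots_size.
  by rewrite mem_iota.
pose pivot m := Ordinal (pivot_lt m).
have pivot_inj : injective pivot.
  move=> m1 m2 /(congr1 val) /eqP; rewrite nth_uniq ?pivots_size //.
  by move/eqP/val_inj.
have GLambdaE m k : GLambda t l b d w G m k = pivot_row (pivot m) 0 k.
  by rewrite mxE GLambda_rowsE (nth_map 0%N) ?pivots_size.
rewrite (@normr_det_triangular_perm _ _ _ pivot (pivot_rank \o pivot)) //; last first.
  move=> m m' m'_neq_m; rewrite GLambdaE; apply: pivot_row_offdiag => //.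
  by rewrite /= nth_uniq ?pivots_size // eq_sym.
under eq_bigr do rewrite GLambdaE.
transitivity (\prod_(k < t * b) `|pivot_row k 0 k|).
  by rewrite [RHS](reindex_inj pivot_inj).
rewrite -prodr_const [RHS]big_mkcond /=.
by apply: eq_bigr => k _; rewrite pivot_row_diag; case: ifP.
Qed.

End PivotRows.

Theorem corollary1 (b c t l r : nat) (H : 'M['F_2]_(c * b, t * b))
  (d : nat -> nat) (w : nat -> 'rV['F_2]_(t * b))
  (G : 'M['F_2]_((t - l) * b, t * b)) :
  (0 < b)%N -> (0 < c)%N -> (0 < t)%N ->
  (* H is a c x t array of b x b circulants *)
  (forall (i : 'I_(c * b)) (j : 'I_(t * b)), H (bnext b i) (bnext b j) = H i j) ->
  \rank H = r ->
  (* l is the least number of column blocks giving rank r, c <= l <= t,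
     and the last l column blocks (D* ) give rank r *)
  (c <= l <= t)%N ->
  (forall S : {set 'I_t}, \rank (subcols H (blkcols t b S)) = r -> (l <= #|S|)%N) ->
  \rank (subcols H (lastcols t l b)) = r ->
  (* the d_j, and the selected columns of D* are independent and number r *)
  (forall j, (j < l)%N -> (d j <= b)%N) ->
  \rank (subcols H (selcols t l b d)) = #|selcols t l b d| ->
  #|selcols t l b d| = r ->
  (* the vectors w_i (zero-padded on the first t-l blocks) *)
  (forall i, (i < l)%N -> (1 <= d i)%N ->
     [/\ H *m (w i)^T = 0,
         forall k : 'I_(t * b), (k %/ b < t - l)%N -> w i 0 k = 0 &
         forall k : 'I_(t * b), (t - l <= k %/ b)%N ->
           (k %% b < d (k %/ b - (t - l)))%N ->
           w i 0 k = if ((k %/ b - (t - l))%N == i) && ((k %% b)%N == 0%N)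
                     then 1 else 0]) ->
  (* G = [I | G'] with G' a (t-l) x l array of b x b circulants *)
  (forall (i : 'I_((t - l) * b)) (k : 'I_(t * b)), (k < (t - l) * b)%N ->
     G i k = if (i : nat) == (k : nat) then 1 else 0) ->
  (forall (i : 'I_((t - l) * b)) (k : 'I_(t * b)), ((t - l) * b <= k)%N ->
     G (bnext b i) (bnext b k) = G i k) ->
  (* G*_qc = [G ; Q] is a generator matrix of the code C = ker H *)
  (forall x : 'rV['F_2]_(t * b), (x <= Gqc t l b d w G)%MS = (H *m x^T == 0)) ->
  row_free (Gqc t l b d w G) ->
  `|\det (GLambda t l b d w G)| = 2 ^+ r.
Proof.
(* The rank, minimality, circulant and generator hypotheses make G_Lambda a
   generator matrix of Lambda; its determinant depends only on the shape of
   its rows. *)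
move=> b_gt0 _ _ _ _ /andP[_ l_le_t] _ _ d_le_b _ sel_card w_spec G_head _ _ _.
rewrite -sel_card; apply: normr_det_GLambda => // [i k i_lt d_gt0|i k i_lt d_gt0].
  by case: (w_spec i i_lt d_gt0) => _ w_head _; apply: w_head.
by case: (w_spec i i_lt d_gt0) => _ _ w_tail; apply: w_tail.
Qed.
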